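(* Let $n_1,n_2\ge1$ be integers and let $X\sim\mathrm{Bino}(n_1,p_1)$ and $Y\sim\mathrm{Bino}(n_2,p_2)$ be independent, with parameter of interest $d=p_1-p_2\in[-1,1]$. Fix $\alpha\in[0,1]$. Let $S_d=\{0,\dots,n_1\}\times\{0,\dots,n_2\}$ and for $d_0\in[-1,1]$ let $D(d_0)=[0,1-d_0]$ if $d_0\in[0,1]$ and $D(d_0)=[-d_0,1]$ if $d_0\in[-1,0)$. Let $T_d:S_d\times[-1,1]\to\mathbb{R}$ be a test statistic satisfying $$T_d(x,y,d_0)=T_d(n_1-x,n_2-y,-d_0)\quad\text{for all }(x,y)\in S_d,\ d_0\in[-1,1].$$ Define $$h_d(x,y,d_0)=\sup_{p_2\in D(d_0)}\ \sum_{\{(u,v)\in S_d:\,T_d(u,v,d_0)\le T_d(x,y,d_0)\}} p_B(u,n_1,p_2+d_0)\,p_B(v,n_2,p_2),$$ and $C_d(x,y)=\overline{\{d_0\in[-1,1]: h_d(x,y,d_0)>\alpha\}}$, written $C_d(x,y)=[L_d(x,y),U_d(x,y)]$. Then $$U_d(x,y)=-L_d(n_1-x,n_2-y)\quad\text{for all }(x,y)\in S_d.$$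
   Context: $p_B(y,n,p)=\binom{n}{y}p^y(1-p)^{n-y}$ denotes the binomial probability mass function. For a set $A\subseteq\mathbb{R}$, $\overline{A}$ denotes the smallest closed simply connected set (i.e. closed interval) containing $A$. A small value of $T_d$ is regarded as evidence against $H_0:d=d_0$. *)

From HB Require Import structures.
From mathcomp Require Import all_boot all_order all_algebra.
From mathcomp Require Import all_classical all_reals all_analysis.
Set Implicit Arguments. Unset Strict Implicit. Unset Printing Implicit Defensive.
Import Order.TTheory GRing.Theory Num.Theory.
Import numFieldNormedType.Exports.
Local Open Scope classical_set_scope.
Local Open Scope ring_scope.

Section Defs.
Variable R : realType.

Definition pB (y n : nat) (p : R) : R := ('C(n, y))%:R * p ^+ y * (1 - p) ^+ (n - y).

Definition Dset (d0 : R) : set R :=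
  if 0 <= d0 then [set p | 0 <= p <= 1 - d0] else [set p | - d0 <= p <= 1].

Variables (n1 n2 : nat) (alpha : R) (T : nat -> nat -> R -> R).

Definition hd (x y : nat) (d0 : R) : R :=
  sup [set (\sum_(u < n1.+1) \sum_(v < n2.+1 | T u v d0 <= T x y d0)
              pB u n1 (p2 + d0) * pB v n2 p2) | p2 in Dset d0].

Definition Aset (x y : nat) : set R :=
  [set d0 | -1 <= d0 <= 1 /\ hd x y d0 > alpha].

Definition hull (A : set R) : set R :=
  \bigcap_(I in [set I : set R | closed I /\ connected I /\ A `<=` I]) I.

Definition Cd (x y : nat) : set R := hull (Aset x y).
Definition Ld (x y : nat) : R := inf (Cd x y).
Definition Ud (x y : nat) : R := sup (Cd x y).
End Defs.

From HB Require Import structures.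
From mathcomp Require Import all_boot all_order all_algebra.
From mathcomp Require Import all_classical all_reals all_analysis.
From mathcomp Require Import ring lra.
Import Order.TTheory GRing.Theory Num.Theory.
Import numFieldNormedType.Exports.
Local Open Scope classical_set_scope.
Local Open Scope ring_scope.

(* Relabelling successes as failures, (x, y, p1, p2, d0) |-> (n1 - x, n2 - y,
   1 - p1, 1 - p2, -d0), maps D(d0) onto D(-d0) and, by the symmetry of T_d,
   the rejection region of (x, y, d0) onto that of (n1 - x, n2 - y, -d0)
   without changing its probability.  Hence h_d(x, y, d0) =
   h_d(n1 - x, n2 - y, -d0), the set {h_d > alpha} for (x, y) is the mirror
   image of the one for (n1 - x, n2 - y), and so are their closed hulls,
   because d0 |-> -d0 is a homeomorphism. *)

Section Complement.
Set Implicit Arguments. Unset Strict Implicit.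
Context {R : realType}.

Lemma pB_complement (u n : nat) (a : R) : (u <= n)%N ->
  pB (n - u) n (1 - a) = pB u n a.
Proof.
by move=> un; rewrite /pB bin_sub // subKn // subKr mulrAC.
Qed.

Lemma Dset_complement (d0 p : R) : Dset d0 p -> Dset (- d0) (1 - p).
Proof.
rewrite /Dset oppr_ge0; case: ifPn => d0_ge0; case: ifPn => d0_le0 /=;
  rewrite -?ltNge in d0_ge0 d0_le0; move=> /andP[? ?]; apply/andP; split; lra.
Qed.

Lemma hull_image_involutive (f : R -> R) (A : set R) :
  continuous f -> involutive f -> hull (f @` A) = f @` hull A.
Proof.
move=> f_cont fK.
have imageK X : f @` (f @` X) = X.
  by rewrite image_comp (_ : f \o f = id) ?image_id //; apply/funext => z; exact: fK.
have image_preimage X : f @` X = f @^-1` X.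
  apply/seteqP; split=> [_ [z Xz <-]|z Xfz]; first by rewrite /preimage /= fK.
  by exists (f z); last exact: fK.
have hull_sub B : hull (f @` B) `<=` f @` hull B.
  move=> z hull_z; exists (f z); last exact: fK.
  move=> I [closedI [connectedI BI]].
  have : (f @` I) z.
    apply: hull_z; split; [|split].
    - by rewrite image_preimage; exact: (proj1 (continuous_closedP f) f_cont).
    - exact: connected_continuous_connected connectedI (continuous_subspaceT _).
    - exact: image_subset.
  by case=> w Iw <-; rewrite fK.
apply/seteqP; split; first exact: hull_sub.
by rewrite -[X in _ `<=` X]imageK; apply: image_subset; rewrite -{1}(imageK A).
Qed.

End Complement.

Section TestSymmetry.
Set Implicit Arguments. Unset Strict Implicit.
Variables (R : realType) (n1 n2 : nat) (alpha : R) (T : nat -> nat -> R -> R).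
Hypothesis T_complement : forall (x y : nat) (d0 : R), (x <= n1)%N -> (y <= n2)%N ->
  -1 <= d0 <= 1 -> T x y d0 = T (n1 - x)%N (n2 - y)%N (- d0).

Definition tail_prob (x y : nat) (d0 p2 : R) : R :=
  \sum_(u < n1.+1) \sum_(v < n2.+1 | T u v d0 <= T x y d0)
    pB u n1 (p2 + d0) * pB v n2 p2.

Lemma hdE (x y : nat) (d0 : R) :
  hd n1 n2 T x y d0 = sup [set tail_prob x y d0 p2 | p2 in Dset d0].
Proof. by []. Qed.

Lemma tail_prob_complement (x y : nat) (d0 p2 : R) :
  (x <= n1)%N -> (y <= n2)%N -> -1 <= d0 <= 1 ->
  tail_prob (n1 - x) (n2 - y) (- d0) (1 - p2) = tail_prob x y d0 p2.
Proof.
move=> xn1 yn2 d0_bnd; rewrite /tail_prob (reindex_inj rev_ord_inj) /=.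
apply: eq_bigr => u _; rewrite (reindex_inj rev_ord_inj) /=.
apply: eq_big => [v|v _]; first by rewrite !subSS -!T_complement // -ltnS.
rewrite (_ : 1 - p2 + - d0 = 1 - (p2 + d0)); last by ring.
by rewrite !subSS !pB_complement // -ltnS.
Qed.

Lemma hd_complement (x y : nat) (d0 : R) :
  (x <= n1)%N -> (y <= n2)%N -> -1 <= d0 <= 1 ->
  hd n1 n2 T (n1 - x) (n2 - y) (- d0) = hd n1 n2 T x y d0.
Proof.
move=> xn1 yn2 d0_bnd; rewrite !hdE; congr sup; apply/seteqP; split.
- move=> _ [q Dq <-]; exists (1 - q); last by rewrite -tail_prob_complement // subKr.
  by have := Dset_complement Dq; rewrite opprK.
- move=> _ [p Dp <-]; exists (1 - p); first exact: Dset_complement.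
  exact: tail_prob_complement.
Qed.

Lemma Aset_complement (x y : nat) : (x <= n1)%N -> (y <= n2)%N ->
  Aset n1 n2 alpha T x y = -%R @` Aset n1 n2 alpha T (n1 - x) (n2 - y).
Proof.
move=> xn1 yn2; apply/seteqP; split=> d0.
- move=> [d0_bnd h_gt]; exists (- d0); last exact: opprK.
  split; first by move: d0_bnd => /andP[? ?]; apply/andP; split; lra.
  by rewrite hd_complement.
- move=> [e [/andP[? ?] h_gt] <-].
  have e_bnd : -1 <= - e <= 1 by apply/andP; split; lra.
  by split=> //; rewrite -hd_complement // opprK.
Qed.

End TestSymmetry.

Theorem proposition2 (R : realType) (n1 n2 : nat) (alpha : R)
  (T : nat -> nat -> R -> R)
  (hn1 : (1 <= n1)%N) (hn2 : (1 <= n2)%N)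
  (halpha : 0 <= alpha <= 1)
  (hT : forall (x y : nat) (d0 : R), (x <= n1)%N -> (y <= n2)%N ->
          -1 <= d0 <= 1 -> T x y d0 = T (n1 - x)%N (n2 - y)%N (- d0)) :
  forall x y : nat, (x <= n1)%N -> (y <= n2)%N ->
    Ud n1 n2 alpha T x y = - Ld n1 n2 alpha T (n1 - x)%N (n2 - y)%N.
Proof.
move=> x y xn1 yn2.
rewrite /Ud /Ld /Cd /inf opprK (Aset_complement alpha hT) //.
rewrite hull_image_involutive //; [exact: opp_continuous | exact: opprK].
Qed.
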